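(* Let $\Gamma\subseteq G_1$ be a subgroup acting freely on $\mathbb{H}^2$. Then $h(\Gamma)$ is abelian, and there exists a complex plane $\mathbb{C}_I=\mathbb{R}+\mathbb{R}I$ (for some imaginary unit $I\in\mathbb{H}$, $I^2=-1$) containing every $a\in\mathbb{H}$ such that $\begin{pmatrix}a&b\\0&1\end{pmatrix}\in h(\Gamma)$ for some $b\in\mathbb{H}$.
   Context: $G_1=\left\{\begin{pmatrix} a&b&r\\ 0&1&s\\ 0&0&1\end{pmatrix}: a,b,r,s\in\mathbb{H}, a\neq0\right\}$, acting on $(x,y)\in\mathbb{H}^2$ by $(x,y)\mapsto(ax+by+r,y+s)$. For such a matrix $A$, $h(A)=\begin{pmatrix}a&b\\0&1\end{pmatrix}$ is its holonomy part, and $h(\Gamma)=\{h(A):A\in\Gamma\}$. *)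

From Stdlib Require Import Reals.
Open Scope R_scope.

Record quat := Quat { q0 : R; q1 : R; q2 : R; q3 : R }.

Definition qzero : quat := Quat 0 0 0 0.
Definition qone : quat := Quat 1 0 0 0.
Definition qreal (x : R) : quat := Quat x 0 0 0.
Definition qadd (p q : quat) : quat :=
  Quat (q0 p + q0 q) (q1 p + q1 q) (q2 p + q2 q) (q3 p + q3 q).
Definition qopp (p : quat) : quat := Quat (- q0 p) (- q1 p) (- q2 p) (- q3 p).
(* Hamilton product: p = a + b i + c j + d k *)
Definition qmul (p q : quat) : quat :=
  Quat (q0 p * q0 q - q1 p * q1 q - q2 p * q2 q - q3 p * q3 q)
       (q0 p * q1 q + q1 p * q0 q + q2 p * q3 q - q3 p * q2 q)
       (q0 p * q2 q - q1 p * q3 q + q2 p * q0 q + q3 p * q1 q)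
       (q0 p * q3 q + q1 p * q2 q - q2 p * q1 q + q3 p * q0 q).
Definition qconj (p : quat) : quat := Quat (q0 p) (- q1 p) (- q2 p) (- q3 p).
Definition qnorm2 (p : quat) : R := q0 p ^ 2 + q1 p ^ 2 + q2 p ^ 2 + q3 p ^ 2.
Definition qinv (p : quat) : quat :=
  qmul (qreal (/ qnorm2 p)) (qconj p).

(* A matrix [[a,b,r],[0,1,s],[0,0,1]] with a,b,r,s in H. *)
Record G1mat := G1M { ga : quat; gb : quat; gr : quat; gs : quat }.

Definition inG1 (A : G1mat) : Prop := ga A <> qzero.

Definition g1id : G1mat := G1M qone qzero qzero qzero.

Definition g1mul (A B : G1mat) : G1mat :=
  G1M (qmul (ga A) (ga B))
      (qadd (qmul (ga A) (gb B)) (gb A))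
      (qadd (qadd (qmul (ga A) (gr B)) (qmul (gb A) (gs B))) (gr A))
      (qadd (gs B) (gs A)).

Definition g1inv (A : G1mat) : G1mat :=
  let ai := qinv (ga A) in
  G1M ai (qopp (qmul ai (gb A)))
      (qopp (qmul ai (qadd (gr A) (qopp (qmul (gb A) (gs A))))))
      (qopp (gs A)).

Definition g1act (A : G1mat) (xy : quat * quat) : quat * quat :=
  (qadd (qadd (qmul (ga A) (fst xy)) (qmul (gb A) (snd xy))) (gr A),
   qadd (snd xy) (gs A)).

Definition is_subgroup_G1 (Gamma : G1mat -> Prop) : Prop :=
  (forall A, Gamma A -> inG1 A) /\
  Gamma g1id /\
  (forall A B, Gamma A -> Gamma B -> Gamma (g1mul A B)) /\
  (forall A, Gamma A -> Gamma (g1inv A)).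

Definition acts_freely (Gamma : G1mat -> Prop) : Prop :=
  forall A, Gamma A -> forall xy : quat * quat, g1act A xy = xy -> A = g1id.

(* holonomy part h(A) = [[a,b],[0,1]], represented by the pair (a,b) *)
Definition hol (A : G1mat) : quat * quat := (ga A, gb A).

Definition holmul (P Q : quat * quat) : quat * quat :=
  (qmul (fst P) (fst Q), qadd (qmul (fst P) (snd Q)) (snd P)).

Definition hol_abelian (Gamma : G1mat -> Prop) : Prop :=
  forall A B, Gamma A -> Gamma B -> holmul (hol A) (hol B) = holmul (hol B) (hol A).

(* An element D of Gamma with no translation in the second coordinate has
   trivial holonomy: if a <> 1 it fixes ((1 - a)^-1 r, 0), and if a = 1 but
   b <> 0 it fixes (0, - b^-1 r), so freeness forces D = 1.  The element
   D = AB (BA)^-1 has no such translation and holonomy h(AB) h(BA)^-1, hence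
   h(AB) = h(BA).  In particular the a-parts of h(Gamma) commute pairwise, and
   the quaternions commuting with a non-real v are exactly R + R I, where I is
   the normalised imaginary part of v. *)

From Stdlib Require Import Reals Lra Classical.
Open Scope R_scope.

Lemma quat_eq (p q : quat) :
  q0 p = q0 q -> q1 p = q1 q -> q2 p = q2 q -> q3 p = q3 q -> p = q.
Proof. destruct p, q; simpl; intros; subst; reflexivity. Qed.

Lemma qnorm2_eq0 (p : quat) : qnorm2 p = 0 -> p = qzero.
Proof.
  destruct p as [a b c d]; unfold qnorm2; simpl; intros E.
  apply quat_eq; simpl; nra.
Qed.

Lemma qnorm2_mul (p q : quat) : qnorm2 (qmul p q) = qnorm2 p * qnorm2 q.
Proof. destruct p, q; unfold qnorm2, qmul; simpl; ring. Qed.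

Lemma qmul_neq0 (p q : quat) : p <> qzero -> q <> qzero -> qmul p q <> qzero.
Proof.
  intros Hp Hq E.
  assert (N : qnorm2 p * qnorm2 q = 0).
  { rewrite <- qnorm2_mul, E; unfold qnorm2; simpl; ring. }
  destruct (Rmult_integral _ _ N) as [Np | Nq].
  - exact (Hp (qnorm2_eq0 _ Np)).
  - exact (Hq (qnorm2_eq0 _ Nq)).
Qed.

Lemma qmul_assoc (p q r : quat) : qmul (qmul p q) r = qmul p (qmul q r).
Proof. destruct p, q, r; apply quat_eq; simpl; ring. Qed.

Lemma qmul_qinv_l (p : quat) : p <> qzero -> qmul (qinv p) p = qone.
Proof.
  intros Hp. assert (N : qnorm2 p <> 0) by (intro E; exact (Hp (qnorm2_eq0 _ E))).
  destruct p as [a b c d]; unfold qnorm2 in N; simpl in N.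
  apply quat_eq; unfold qinv, qnorm2, qmul, qconj, qreal, qone; simpl; field; intro E; apply N; lra.
Qed.

Lemma qmul_qinvK (p u : quat) : p <> qzero -> qmul p (qmul (qinv p) u) = u.
Proof.
  intros Hp. assert (N : qnorm2 p <> 0) by (intro E; exact (Hp (qnorm2_eq0 _ E))).
  destruct p as [a b c d], u; unfold qnorm2 in N; simpl in N.
  apply quat_eq; unfold qinv, qnorm2, qmul, qconj, qreal; simpl; field; intro E; apply N; lra.
Qed.

Lemma qmul_qinv_eq1 (p q : quat) : q <> qzero -> qmul p (qinv q) = qone -> p = q.
Proof.
  intros Hq E.
  assert (Hp : p = qmul (qmul p (qinv q)) q).
  { rewrite qmul_assoc, qmul_qinv_l by exact Hq. destruct p; apply quat_eq; simpl; ring. }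
  rewrite Hp, E. destruct q; apply quat_eq; simpl; ring.
Qed.

Lemma g1act_fixpoint_of_a_neq1 (D : G1mat) :
  gs D = qzero -> ga D <> qone -> exists xy, g1act D xy = xy.
Proof.
  intros Hs Ha.
  set (p := qadd qone (qopp (ga D))).
  assert (Hp : p <> qzero).
  { intro E; apply Ha. destruct (ga D) as [a0 a1 a2 a3]; unfold p in E; simpl in E.
    injection E; intros; apply quat_eq; simpl; lra. }
  exists (qmul (qinv p) (gr D), qzero).
  pose proof (qmul_qinvK p (gr D) Hp) as C.
  unfold g1act; simpl; rewrite Hs; f_equal.
  2: apply quat_eq; simpl; ring.
  destruct (qmul (qinv p) (gr D)) as [x0 x1 x2 x3].
  unfold p in C; destruct (ga D), (gb D), (gr D).
  unfold qmul, qadd, qopp, qone in C |- *; simpl in *.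
  injection C; intros; apply quat_eq; simpl; lra.
Qed.

Lemma g1act_fixpoint_of_b_neq0 (D : G1mat) :
  gs D = qzero -> ga D = qone -> gb D <> qzero -> exists xy, g1act D xy = xy.
Proof.
  intros Hs Ha Hb.
  exists (qzero, qopp (qmul (qinv (gb D)) (gr D))).
  pose proof (qmul_qinvK (gb D) (gr D) Hb) as C.
  unfold g1act; simpl; rewrite Hs, Ha; f_equal.
  2: destruct (qmul (qinv (gb D)) (gr D)); apply quat_eq; simpl; ring.
  destruct (gb D), (gr D), (qmul (qinv _) _); simpl in *.
  injection C; intros; apply quat_eq; simpl; lra.
Qed.

Lemma hol_eq1_of_fixpoint_free (D : G1mat) :
  gs D = qzero -> (forall xy, g1act D xy = xy -> D = g1id) -> hol D = (qone, qzero).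
Proof.
  intros Hs Hfree.
  destruct (classic (ga D = qone)) as [Ha | Ha].
  - destruct (classic (gb D = qzero)) as [Hb | Hb].
    + unfold hol; rewrite Ha, Hb; reflexivity.
    + destruct (g1act_fixpoint_of_b_neq0 D Hs Ha Hb) as [xy Hxy].
      rewrite (Hfree xy Hxy); reflexivity.
  - destruct (g1act_fixpoint_of_a_neq1 D Hs Ha) as [xy Hxy].
    rewrite (Hfree xy Hxy); reflexivity.
Qed.

Definition holinv (P : quat * quat) : quat * quat :=
  (qinv (fst P), qopp (qmul (qinv (fst P)) (snd P))).

Lemma hol_g1mul (A B : G1mat) : hol (g1mul A B) = holmul (hol A) (hol B).
Proof. reflexivity. Qed.

Lemma hol_g1inv (A : G1mat) : hol (g1inv A) = holinv (hol A).
Proof. reflexivity. Qed.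

Lemma holmul_holinv_eq1 (P Q : quat * quat) :
  fst Q <> qzero -> holmul P (holinv Q) = (qone, qzero) -> P = Q.
Proof.
  destruct P as [p pb], Q as [q qb]; unfold holmul, holinv; simpl; intros Hq E.
  pose proof (f_equal fst E) as Ea; pose proof (f_equal snd E) as Eb.
  cbn [fst snd] in Ea, Eb.
  apply qmul_qinv_eq1 in Ea; [subst p | exact Hq].
  assert (Eq : qmul q (qopp (qmul (qinv q) qb)) = qopp qb).
  { rewrite <- (qmul_qinvK q qb Hq) at 2.
    destruct q, (qmul (qinv _) qb); apply quat_eq; simpl; ring. }
  rewrite Eq in Eb. f_equal.
  destruct pb, qb; injection Eb; intros; apply quat_eq; simpl; lra.
Qed.

Lemma gs_commutator (A B : G1mat) :
  gs (g1mul (g1mul A B) (g1inv (g1mul B A))) = qzero.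
Proof. destruct (gs A), (gs B); apply quat_eq; simpl; ring. Qed.

Lemma hol_abelian_of_free (Gamma : G1mat -> Prop) :
  is_subgroup_G1 Gamma -> acts_freely Gamma -> hol_abelian Gamma.
Proof.
  intros [HG1 [_ [Hmul Hinv]]] Hfree A B HA HB.
  set (D := g1mul (g1mul A B) (g1inv (g1mul B A))).
  assert (HD : hol D = (qone, qzero)).
  { apply hol_eq1_of_fixpoint_free; [apply gs_commutator |].
    apply Hfree; unfold D; auto. }
  rewrite <- !hol_g1mul.
  apply holmul_holinv_eq1.
  - apply qmul_neq0; apply HG1; assumption.
  - rewrite <- hol_g1inv, <- hol_g1mul; exact HD.
Qed.

Definition qis_real (p : quat) : Prop := q1 p = 0 /\ q2 p = 0 /\ q3 p = 0.

Definition qim_norm2 (p : quat) : R := q1 p ^ 2 + q2 p ^ 2 + q3 p ^ 2.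

Definition qim_unit (p : quat) : quat :=
  let n := sqrt (qim_norm2 p) in Quat 0 (q1 p / n) (q2 p / n) (q3 p / n).

Definition in_qplane (I a : quat) : Prop :=
  exists x y : R, a = qadd (qreal x) (qmul (qreal y) I).

Lemma qim_norm2_gt0 (v : quat) : ~ qis_real v -> 0 < qim_norm2 v.
Proof.
  intros Hv. destruct (Rlt_le_dec 0 (qim_norm2 v)) as [Hlt | Hle]; [exact Hlt |].
  exfalso; apply Hv; unfold qim_norm2 in Hle; repeat split; nra.
Qed.

Lemma qim_unit_sqr (v : quat) :
  ~ qis_real v -> qmul (qim_unit v) (qim_unit v) = qopp qone.
Proof.
  intros Hv. pose proof (qim_norm2_gt0 v Hv) as HS.
  assert (Hn : 0 < sqrt (qim_norm2 v)) by (apply sqrt_lt_R0; exact HS).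
  assert (Hnn : sqrt (qim_norm2 v) * sqrt (qim_norm2 v) = qim_norm2 v)
    by (apply sqrt_sqrt; lra).
  unfold qim_unit; set (n := sqrt (qim_norm2 v)) in *.
  apply quat_eq; simpl; try (field; lra).
  transitivity (- (qim_norm2 v / (n * n))).
  - unfold qim_norm2; field; lra.
  - rewrite Hnn; field; lra.
Qed.

Lemma qreal_in_qplane (I a : quat) : qis_real a -> in_qplane I a.
Proof.
  intros [H1 [H2 H3]]. exists (q0 a), 0.
  destruct a, I; simpl in *; subst; apply quat_eq; simpl; ring.
Qed.

Lemma Rvec_cross_eq0_proj (a1 a2 a3 v1 v2 v3 : R) :
  a1 * v2 = a2 * v1 -> a1 * v3 = a3 * v1 ->
  (v1 ^ 2 + v2 ^ 2 + v3 ^ 2) * a1 = (a1 * v1 + a2 * v2 + a3 * v3) * v1.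
Proof.
  intros H12 H13.
  transitivity ((a1 * v1 + a2 * v2 + a3 * v3) * v1
                + v2 * (a1 * v2 - a2 * v1) + v3 * (a1 * v3 - a3 * v1)); [ring |].
  rewrite H12, H13; ring.
Qed.

(* Commuting quaternions have parallel imaginary parts, so Im a is the
   projection (Im a . Im v) / |Im v|^2 * Im v. *)
Lemma qcommute_in_qplane (v a : quat) :
  ~ qis_real v -> qmul a v = qmul v a -> in_qplane (qim_unit v) a.
Proof.
  intros Hv Hc. pose proof (qim_norm2_gt0 v Hv) as HS.
  assert (Hn : 0 < sqrt (qim_norm2 v)) by (apply sqrt_lt_R0; exact HS).
  unfold qim_unit; set (S := qim_norm2 v) in *; set (n := sqrt S) in *.
  destruct v as [v0 v1 v2 v3], a as [a0 a1 a2 a3]; simpl in *.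
  injection Hc; intros E3 E2 E1 _.
  assert (C12 : a1 * v2 = a2 * v1) by lra.
  assert (C13 : a1 * v3 = a3 * v1) by lra.
  assert (C23 : a2 * v3 = a3 * v2) by lra.
  set (dot := a1 * v1 + a2 * v2 + a3 * v3).
  assert (K1 : S * a1 = dot * v1).
  { exact (Rvec_cross_eq0_proj a1 a2 a3 v1 v2 v3 C12 C13). }
  assert (K2 : S * a2 = dot * v2).
  { pose proof (Rvec_cross_eq0_proj a2 a1 a3 v2 v1 v3 (eq_sym C12) C23).
    unfold S, qim_norm2, dot; simpl; lra. }
  assert (K3 : S * a3 = dot * v3).
  { pose proof (Rvec_cross_eq0_proj a3 a1 a2 v3 v1 v2 (eq_sym C13) (eq_sym C23)).
    unfold S, qim_norm2, dot; simpl; lra. }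
  exists a0, (dot / S * n).
  apply quat_eq; simpl; [ring | | |];
    apply (Rmult_eq_reg_l S); try lra;
    [rewrite K1 | rewrite K2 | rewrite K3]; field; lra.
Qed.

Lemma qcommuting_in_qplane (Sa : quat -> Prop) :
  (forall a c, Sa a -> Sa c -> qmul a c = qmul c a) ->
  exists I, qmul I I = qopp qone /\ forall a, Sa a -> in_qplane I a.
Proof.
  intros Hcomm.
  destruct (classic (exists v, Sa v /\ ~ qis_real v)) as [[v [Hv Hnr]] | Hreal].
  - exists (qim_unit v); split; [exact (qim_unit_sqr v Hnr) |].
    intros a Ha; exact (qcommute_in_qplane v a Hnr (Hcomm a v Ha Hv)).
  - exists (Quat 0 1 0 0); split; [apply quat_eq; simpl; ring |].
    intros a Ha; apply qreal_in_qplane.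
    apply NNPP; intro Hnr; exact (Hreal (ex_intro _ a (conj Ha Hnr))).
Qed.

Theorem mainTheorem9 (Gamma : G1mat -> Prop) :
  is_subgroup_G1 Gamma -> acts_freely Gamma ->
  hol_abelian Gamma /\
  exists I : quat, qmul I I = qopp qone /\
    forall a b : quat, (exists A, Gamma A /\ hol A = (a, b)) ->
      exists x y : R, a = qadd (qreal x) (qmul (qreal y) I).
Proof.
  intros HS Hfree.
  pose proof (hol_abelian_of_free Gamma HS Hfree) as Hab.
  split; [exact Hab |].
  destruct (qcommuting_in_qplane (fun a => exists A, Gamma A /\ ga A = a))
    as [I [HI Hplane]].
  { intros a c [A [HA <-]] [B [HB <-]]. exact (f_equal fst (Hab A B HA HB)). }
  exists I; split; [exact HI |].
  intros a b [A [HA Eh]]. apply Hplane.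
  exists A; split; [exact HA | now injection Eh].
Qed.
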